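(* Let $\Omega$ be a transitive state space whose positive cone $V_+$ is self-dual with respect to $\langle\cdot,\cdot\rangle_{GL(\Omega)}$. Then for every nonzero effect $e\in\mathcal E_\Omega$, $$\frac{e}{\langle u,e\rangle_{GL(\Omega)}}\in\Omega,$$ and for every ideal observable $F=\{f_a\}_{a\in A}$ on $\Omega$, $$\left\langle f_a,\frac{f_a}{\langle u,f_a\rangle_{GL(\Omega)}}\right\rangle_{GL(\Omega)}=1\quad\text{for all }a\in A.$$
   Context: $V=\mathbb R^{N+1}$ with Euclidean inner product $(\cdot,\cdot)_E$. A state space $\Omega\subset V$ is a compact convex set with $\mathrm{span}(\Omega)=V$ and $0\notin\mathrm{aff}(\Omega)$; $V_+=\{\lambda\omega:\lambda\ge0,\omega\in\Omega\}$; the unit effect $u\in V^*$ satisfies $u(\omega)=1$ on $\Omega$; effects $\mathcal E_\Omega=\{e\in V^*:0\le e(\omega)\le1\ \forall\omega\in\Omega\}$; an observable with finite outcome set $A$ is a family of effects $\{f_a\}_{a\in A}$ with $\sum_af_a=u$ (trivial observable $\{u\}$ excluded). An effect is pure if it is an extreme point of $\mathcal E_\Omega$; indecomposable if $e\ne0$ and $e=e_1+e_2$ with $e_1,e_2\in\mathcal E_\Omega$ forces $e_1,e_2$ to be scalar multiples of $e$. $F=\{f_a\}$ is ideal if each $f_a$ equals $\sum_{i\in I_a}e_i$ or $u-\sum_{i\in I_a}e_i$ for a finite family of pure indecomposable effects. $GL(\Omega)$: group of linear bijections $T$ of $V$ with $T(\Omega)=\Omega$, $\mu$ its normalized Haar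 measure, $\langle x,y\rangle_{GL(\Omega)}=\int(Tx,Ty)_E\,d\mu(T)$. $\Omega$ is transitive if $GL(\Omega)$ acts transitively on the extreme points; then there is a unique $GL(\Omega)$-invariant state $\omega_M$, and by convention $(\omega_M,\omega_M)_E=1$. $V_+$ is self-dual w.r.t. $\langle\cdot,\cdot\rangle_{GL(\Omega)}$ if $V_+=\{y:\langle x,y\rangle_{GL(\Omega)}\ge0\ \forall x\in V_+\}$. Every linear functional (in particular every effect and $u$) is identified with the vector in $V$ representing it through $\langle\cdot,\cdot\rangle_{GL(\Omega)}$, and inner products of effects are computed between these vectors. *)

From HB Require Import structures.
From mathcomp Require Import all_boot all_order all_algebra.
From mathcomp Require Import all_classical all_reals all_analysis.

Set Implicit Arguments.
Unset Strict Implicit.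
Unset Printing Implicit Defensive.

Import Order.TTheory GRing.Theory Num.Theory.
Import numFieldNormedType.Exports.
Local Open Scope classical_set_scope.
Local Open Scope ring_scope.

Section GPT.
Variables (R : realType) (n : nat).
Local Notation V := 'rV[R]_n.

Definition dotE (x y : V) : R := \sum_(i < n) x ord0 i * y ord0 i.

Definition MatB : measurableType (@open 'M[R]_n).-sigma :=
  g_sigma_algebraType (@open 'M[R]_n).

(* A matrix T acts on V by x |-> x *m T. *)
Definition GLset (Om : set V) : set 'M[R]_n :=
  [set T | T \in unitmx /\ [set x *m T | x in Om] = Om].

Definition is_haar (Om : set V) (mu : probability MatB R) : Prop :=
  mu (GLset Om) = 1%E /\
  forall S, GLset Om S -> forall A : set MatB, measurable A ->
    mu [set T : MatB | A (S *m T)] = mu A.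

Definition ipG (mu : probability MatB R) (x y : V) : R :=
  Rintegral mu setT (fun T : MatB => dotE (x *m (T : 'M[R]_n)) (y *m (T : 'M[R]_n))).

Definition convex_set (S : set V) : Prop :=
  forall x y, S x -> S y -> forall t : R, 0 <= t <= 1 ->
    S (t *: x + (1 - t) *: y).

Definition spans (S : set V) : Prop :=
  forall v : V, exists k (c : 'I_k -> R) (w : 'I_k -> V),
    (forall i, S (w i)) /\ v = \sum_(i < k) c i *: w i.

Definition zero_notin_aff (S : set V) : Prop :=
  ~ exists k (c : 'I_k -> R) (w : 'I_k -> V),
    [/\ forall i, S (w i), \sum_(i < k) c i = 1 & \sum_(i < k) c i *: w i = 0].

Definition state_space (Om : set V) : Prop :=
  [/\ compact Om, convex_set Om, spans Om & zero_notin_aff Om].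

Definition extreme_point (S : set V) (x : V) : Prop :=
  S x /\ forall y z (t : R), S y -> S z -> 0 < t < 1 ->
    x = t *: y + (1 - t) *: z -> y = x /\ z = x.

Definition transitive_ss (Om : set V) : Prop :=
  forall x y, extreme_point Om x -> extreme_point Om y ->
    exists T, GLset Om T /\ y = x *m T.

Definition invariant_state_normalized (Om : set V) : Prop :=
  forall wM, Om wM -> (forall T, GLset Om T -> wM *m T = wM) -> dotE wM wM = 1.

Definition Vplus (Om : set V) : set V :=
  [set y | exists l : R, 0 <= l /\ exists w, Om w /\ y = l *: w].

Definition self_dual (mu : probability MatB R) (Om : set V) : Prop :=
  Vplus Om = [set y | forall x, Vplus Om x -> 0 <= ipG mu x y].

(* Linear functionals are identified with their representing vectors
   w.r.t. <.,.>_{GL(Om)}: the functional of e is  x |-> ipG mu e x. *)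
Definition unit_effect (mu : probability MatB R) (Om : set V) (u : V) : Prop :=
  forall w, Om w -> ipG mu u w = 1.

Definition effects (mu : probability MatB R) (Om : set V) : set V :=
  [set e | forall w, Om w -> 0 <= ipG mu e w <= 1].

Definition pure_effect mu Om (e : V) : Prop := extreme_point (effects mu Om) e.

Definition indecomposable mu Om (e : V) : Prop :=
  e != 0 /\ forall e1 e2, effects mu Om e1 -> effects mu Om e2 -> e = e1 + e2 ->
    (exists c : R, e1 = c *: e) /\ (exists c : R, e2 = c *: e).

(* observable with finite outcome set A (the trivial observable {u} excluded) *)
Definition observable mu Om (u : V) (A : finType) (f : A -> V) : Prop :=
  [/\ forall a, effects mu Om (f a), \sum_(a : A) f a = u & (1 < #|A|)%N].

Definition ideal_observable mu Om (u : V) (A : finType) (f : A -> V) : Prop :=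
  observable mu Om u f /\
  forall a, exists k (es : 'I_k -> V),
    (forall i, pure_effect mu Om (es i) /\ indecomposable mu Om (es i)) /\
    (f a = \sum_(i < k) es i \/ f a = u - \sum_(i < k) es i).

End GPT.

From HB Require Import structures.
From mathcomp Require Import all_boot all_order all_algebra.
From mathcomp Require Import all_classical all_reals all_analysis.
From mathcomp Require Import ring lra.
Import Order.TTheory GRing.Theory Num.Def Num.Theory.
Import numFieldNormedType.Exports.
Local Open Scope classical_set_scope.
Local Open Scope ring_scope.

(* Self-duality makes every effect e a nonnegative multiple of a state,
   e = <u,e> w, which is the first claim.  Together with 0 \notin aff Om it
   also makes <.,.> positive definite, so q x := <x,x> is strictly convex on
   Om and attains its maximum over Om at an extreme point; by transitivity and
   GL(Om)-invariance of <.,.> it does so at every extreme point, whence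
   <w,v> <= <w,w> for w extreme and v in Om.  An indecomposable effect is a
   multiple of an extreme state w, and purity then forces e(w) = 1, so
   <e,e> = <u,e>.  When a sum of such effects is still below u, evaluating it
   at these states shows that the summands are mutually orthogonal, so
   <f,f> = <u,f> both for f = sum e_i and for f = u - sum e_i. *)

Section NormEstimates.
Context {R : realType}.

Lemma mx_norm_ge_entry {m n} (A : 'M[R]_(m, n)) i j : `|A i j| <= `|A|.
Proof.
rewrite [X in _ <= X]/normr /= mx_normrE.
by apply/bigmax_geP; right; exists (i, j).
Qed.

Lemma mx_norm_le {m n} (A : 'M[R]_(m, n)) c : 0 <= c ->
  (forall i j, `|A i j| <= c) -> `|A| <= c.
Proof.
move=> c0 Ac; rewrite [X in X <= _]/normr /= mx_normrE.
by apply/bigmax_leP; split => // -[i j] _; exact: Ac.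
Qed.

Lemma norm_sum_mul_le n (a b : 'I_n -> R) ca cb :
  (forall k, `|a k| <= ca) -> (forall k, `|b k| <= cb) ->
  `|\sum_(k < n) a k * b k| <= n%:R * (ca * cb).
Proof.
move=> aca bcb; apply: le_trans (ler_norm_sum _ _ _) _.
apply: le_trans (_ : \sum_(k < n) ca * cb <= _); last first.
  by rewrite sumr_const card_ord mulr_natl.
by apply: ler_sum => k _; rewrite normrM ler_pM ?aca ?bcb.
Qed.

Lemma mx_norm_mulmx {m n p} (A : 'M[R]_(m, n)) (B : 'M[R]_(n, p)) :
  `|A *m B| <= n%:R * (`|A| * `|B|).
Proof.
apply: mx_norm_le => [|i j]; first by rewrite !mulr_ge0.
by rewrite mxE; apply: norm_sum_mul_le => k; exact: mx_norm_ge_entry.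
Qed.

Lemma lipschitz_continuous (V W : normedModType R) (f : V -> W) (k : R) :
  0 <= k -> (forall a b, `|f a - f b| <= k * `|a - b|) -> continuous f.
Proof.
move=> k0 fk x; apply/cvgrPdist_lt => e e0.
have k1 : 0 < k + 1 by rewrite ltr_pwDr.
near=> z; apply: le_lt_trans (fk x z) _.
apply: le_lt_trans (_ : _ <= (k + 1) * `|x - z|) _.
  by apply: ler_pM => //; rewrite lerDl.
rewrite -ltr_pdivlMl //; near: z.
by apply: cvgr_dist_lt => //; rewrite mulrC divr_gt0.
Unshelve. all: by end_near. Qed.

Lemma mulmx_continuous {m n p} (A : 'M[R]_(m, n)) :
  continuous (@mulmx R m n p A).
Proof.
apply: (@lipschitz_continuous _ _ _ (n%:R * `|A|)); first by rewrite mulr_ge0.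
by move=> B C; rewrite -mulmxBr -mulrA; exact: mx_norm_mulmx.
Qed.

Lemma mulmxr_continuous {m n p} (B : 'M[R]_(n, p)) :
  continuous (@mulmxr R m n p B).
Proof.
apply: (@lipschitz_continuous _ _ _ (n%:R * `|B|)); first by rewrite mulr_ge0.
by move=> A C; rewrite /= -mulmxBl -mulrA [`|B| * _]mulrC; exact: mx_norm_mulmx.
Qed.

Lemma compact_norm_le {V : normedModType R} {A : set V} :
  compact A -> exists2 c : R, 0 <= c & forall x, A x -> `|x| <= c.
Proof.
move=> /compact_bounded [M [Mreal AM]]; exists (`|M| + 1) => [|x Ax].
  by rewrite addr_ge0.
by apply: (AM (`|M| + 1)) => //; rewrite (le_lt_trans (real_ler_norm Mreal)) ?ltrDl.
Qed.

End NormEstimates.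

Section GLClosed.
Context {R : realType} {n : nat} (Om : set 'rV[R]_n).
Hypotheses (cOm : compact Om) (sOm : spans Om).

Lemma unitmx_spans_image (p : 'M[R]_n) :
  (forall y, Om y -> exists x, y = x *m p) -> p \in unitmx.
Proof.
move=> onto; rewrite -row_full_unit -sub1mx; apply/row_subP => i.
have [k [c [w [Ow ->]]]] := sOm (row i 1%:M).
have /choice [x wx] : forall j, exists x, w j = x *m p by move=> j; exact: onto.
apply/submxP; exists (\sum_(j < k) c j *: x j).
by rewrite mulmx_suml; apply: eq_bigr => j _; rewrite -scalemxAl -wx.
Qed.

Lemma GLset_closure_into {p : 'M[R]_n} : closure (GLset Om) p ->
  forall x, Om x -> Om (x *m p).
Proof.
move=> clp x Ox.
apply: (compact_closed (@norm_hausdorff _ _) cOm) => B /(mulmx_continuous x p).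
by case/clp => T [[_ GT] BT]; exists (x *m T); split => //; rewrite -GT; exists x.
Qed.

Lemma GLset_closure_onto {p : 'M[R]_n} : closure (GLset Om) p ->
  forall y, Om y -> exists2 x, Om x & y = x *m p.
Proof.
(* Om p is compact, and y = x T with T close to p is close to x p. *)
move=> clp y Oy.
have closed_img : closed [set x *m p | x in Om].
  apply: (compact_closed (@norm_hausdorff _ _)).
  apply: continuous_compact => //.
  by apply: continuous_subspaceT; exact: mulmxr_continuous.
suff /closed_img [x Ox <-] : closure [set x *m p | x in Om] y by exists x.
move=> U /nbhs_ballP [e e0 eU].
have [c c0 Omc] := compact_norm_le cOm.
have k0 : 0 < n%:R * c + 1 by rewrite ltr_pwDr // mulr_ge0.
have [|T [[_ GT]]] := clp (ball p (e / (n%:R * c + 1))).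
  by apply: nbhsx_ballx; rewrite divr_gt0.
rewrite -ball_normE /= distrC ltr_pdivlMr // => pT.
have [x Ox xT] : [set x *m T | x in Om] y by rewrite GT.
exists (x *m p); split; first by exists x.
apply: eU; rewrite -ball_normE /= -xT -mulmxBr.
apply: le_lt_trans (mx_norm_mulmx _ _) _; apply: le_lt_trans pT.
rewrite mulrA [_ * (_ + 1)]mulrC ler_wpM2r //.
by apply: le_trans (_ : _ <= n%:R * c) _; rewrite ?ler_wpM2l ?Omc ?lerDl.
Qed.

Lemma GLset_closed : closed (GLset Om).
Proof.
move=> p clp; split.
  by apply: unitmx_spans_image => y /(GLset_closure_onto clp) [x _ ->]; exists x.
apply/seteqP; split => [_ [x Ox <-]|y /(GLset_closure_onto clp) [x Ox ->]].
  exact: GLset_closure_into.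
by exists x.
Qed.

End GLClosed.

Section BorelMatrices.
Context {R : realType} {n : nat}.

Lemma measurable_closed_MatB (A : set 'M[R]_n) : closed A ->
  measurable (A : set (MatB R n)).
Proof.
move=> cA; rewrite -(setCK A); apply: measurableC.
by apply: sub_sigma_algebra; exact: closed_openC.
Qed.

Lemma measurable_fun_continuous_MatB (f : 'M[R]_n -> R) : continuous f ->
  measurable_fun setT (f : MatB R n -> R).
Proof.
move=> /continuousP cf.
apply: (measurability _ (measurable_realfun.RGenOpens.measurableE R)).
move=> _ [_ [a [b ->] <-]]; apply: measurableI => //.
by apply: sub_sigma_algebra; apply: cf; exact: interval_open.
Qed.

Lemma measurable_fun_continuous_MatB_MatB (f : 'M[R]_n -> 'M[R]_n) :
  continuous f -> measurable_fun setT (f : MatB R n -> MatB R n).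
Proof.
move=> /continuousP cf.
apply: (measurability _ (erefl (@measurable _ (MatB R n)))).
by move=> _ [A oA <-]; apply: measurableI => //; apply: sub_sigma_algebra; exact: cf.
Qed.

End BorelMatrices.

Section DotE.
Context {R : realType} {n : nat}.
Implicit Types x y z : 'rV[R]_n.

Lemma dotEC x y : dotE x y = dotE y x.
Proof. by apply: eq_bigr => i _; rewrite mulrC. Qed.

Lemma dotEDl x y z : dotE (x + y) z = dotE x z + dotE y z.
Proof. by rewrite /dotE -big_split; apply: eq_bigr => i _; rewrite mxE mulrDl. Qed.

Lemma dotEZl k x y : dotE (k *: x) y = k * dotE x y.
Proof. by rewrite /dotE mulr_sumr; apply: eq_bigr => i _; rewrite mxE mulrA. Qed.

Lemma dotE_ge0 x : 0 <= dotE x x.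
Proof. by apply: sumr_ge0 => i _; rewrite -expr2 sqr_ge0. Qed.

Lemma norm_dotE_le x y : `|dotE x y| <= n%:R * (`|x| * `|y|).
Proof. by apply: norm_sum_mul_le => i; exact: mx_norm_ge_entry. Qed.

Lemma dotE_mulmx_continuous x y :
  continuous (fun T : 'M[R]_n => dotE (x *m T) (y *m T)).
Proof.
apply: continuous_big => [|i _ T]; first exact: add_continuous.
by apply: continuousM;
  exact: (continuous_comp (mulmx_continuous _ T) (@coord_continuous _ _ _ _ _ _)).
Qed.

End DotE.

Section HaarInnerProduct.
Context {R : realType} {n : nat} (Om : set 'rV[R]_n) (mu : probability (MatB R n) R).
Hypotheses (cOm : compact Om) (sOm : spans Om) (haar : is_haar Om mu).
Implicit Types x y z : 'rV[R]_n.

Definition ipG_integrand x y (T : MatB R n) : R := dotE (x *m T) (y *m T).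

Lemma measurable_ipG_integrand x y : measurable_fun setT (ipG_integrand x y).
Proof. exact: measurable_fun_continuous_MatB (dotE_mulmx_continuous x y). Qed.

Lemma measurable_GLset : measurable (GLset Om : set (MatB R n)).
Proof. exact: measurable_closed_MatB (GLset_closed _ cOm sOm). Qed.

Lemma GLsetC_null : mu (~` GLset Om) = 0%E.
Proof.
rewrite probability_setC; last exact: measurable_GLset.
by rewrite haar.1 subee.
Qed.

Lemma GLset_row_bounded x : exists2 c : R, 0 <= c &
  forall T, GLset Om T -> `|x *m T| <= c.
Proof.
have [k [a [w [Ow ->]]]] := sOm x.
have [c c0 Omc] := compact_norm_le cOm.
exists (\sum_(j < k) `|a j| * c) => [|T [_ GT]].
  by apply: sumr_ge0 => j _; rewrite mulr_ge0.
rewrite mulmx_suml; apply: le_trans (ler_norm_sum _ _ _) _; apply: ler_sum => j _.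
by rewrite -scalemxAl normrZ ler_wpM2l // Omc // -GT; exists (w j).
Qed.

Lemma ipG_integrable x y : mu.-integrable setT (EFin \o ipG_integrand x y).
Proof.
have mf := iffRL (measurable_realfun.measurable_EFinP _ _)
  (measurable_ipG_integrand x y).
have [cx cx0 xc] := GLset_row_bounded x.
have [cy cy0 yc] := GLset_row_bounded y.
apply/integrableP; split => //.
apply: (@le_lt_trans _ _ ((n%:R * (cx * cy))%:E * mu setT)%E); last first.
  by rewrite probability_setT mule1 ltry.
apply: integral_le_bound => //; first by rewrite lee_fin !mulr_ge0.
exists (~` GLset Om); split; first exact: measurableC measurable_GLset.
  exact: GLsetC_null.
move=> T /= notle GT; apply: notle => _; rewrite lee_fin.
apply: le_trans (norm_dotE_le _ _) _.
by rewrite ler_wpM2l // ler_pM ?xc ?yc.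
Qed.

Lemma ipGC x y : ipG mu x y = ipG mu y x.
Proof. by apply: eq_Rintegral => T _; exact: dotEC. Qed.

Lemma ipGDl x y z : ipG mu (x + y) z = ipG mu x z + ipG mu y z.
Proof.
rewrite /ipG -RintegralD //; try exact: ipG_integrable.
by apply: eq_Rintegral => T _; rewrite mulmxDl dotEDl.
Qed.

Lemma ipGZl k x y : ipG mu (k *: x) y = k * ipG mu x y.
Proof.
rewrite /ipG -RintegralZl //; last exact: ipG_integrable.
by apply: eq_Rintegral => T _; rewrite -scalemxAl dotEZl.
Qed.

Lemma ipG_ge0 x : 0 <= ipG mu x x.
Proof. by apply: Rintegral_ge0 => T _; exact: dotE_ge0. Qed.

Lemma ipG_GLset_invariant (S : 'M[R]_n) x y : GLset Om S ->
  ipG mu (x *m S) (y *m S) = ipG mu x y.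
Proof.
move=> GS; rewrite /ipG /Rintegral; congr fine.
have mS := measurable_fun_continuous_MatB_MatB _ (mulmx_continuous S).
have mf := iffRL (measurable_realfun.measurable_EFinP _ _)
  (measurable_ipG_integrand x y).
have fS : (EFin \o ipG_integrand x y) \o (mulmx S : MatB R n -> MatB R n) =
    EFin \o ipG_integrand (x *m S) (y *m S).
  by apply: funext => T; rewrite /= /ipG_integrand !mulmxA.
have intS : mu.-integrable (mulmx S @^-1` setT)
    ((EFin \o ipG_integrand x y) \o (mulmx S : MatB R n -> MatB R n)).
  by rewrite preimage_setT fS; exact: ipG_integrable.
have := integral_pushforward mS mf intS measurableT.
rewrite preimage_setT fS => pushE.
rewrite -pushE; apply: eq_measure_integral => A mA _.
exact: haar.2.
Qed.

End HaarInnerProduct.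

Section SymmetricBilinearForm.
Context {R : realFieldType} {V : lmodType R} {b : V -> V -> R}.
Hypotheses (bC : forall x y, b x y = b y x)
  (bDl : forall x y z, b (x + y) z = b x z + b y z)
  (bZl : forall k x y, b (k *: x) y = k * b x y).
Implicit Types x y z : V.

Lemma bilDr x y z : b x (y + z) = b x y + b x z.
Proof. by rewrite bC bDl !(bC x). Qed.

Lemma bilZr k x y : b x (k *: y) = k * b x y.
Proof. by rewrite bC bZl bC. Qed.

Lemma bil0l x : b 0 x = 0.
Proof. by rewrite -(scale0r 0) bZl mul0r. Qed.

Lemma bil0r x : b x 0 = 0.
Proof. by rewrite bC bil0l. Qed.

Lemma bilBl x y z : b (x - y) z = b x z - b y z.
Proof. by rewrite bDl -scaleN1r bZl mulN1r. Qed.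

Lemma bilBr x y z : b x (y - z) = b x y - b x z.
Proof. by rewrite bC bilBl !(bC x). Qed.

Lemma bil_suml k (F : 'I_k -> V) y :
  b (\sum_(i < k) F i) y = \sum_(i < k) b (F i) y.
Proof. by elim/big_ind2 : _ => [|u u' v v' <- <-|]; rewrite ?bil0l ?bDl. Qed.

Lemma bil_sumr k (F : 'I_k -> V) y :
  b y (\sum_(i < k) F i) = \sum_(i < k) b y (F i).
Proof. by rewrite bC bil_suml; apply: eq_bigr => i _; rewrite bC. Qed.

Lemma bil_quadD x y : b (x + y) (x + y) = b x x + 2 * b x y + b y y.
Proof. by rewrite bDl !bilDr (bC y x); ring. Qed.

Lemma bil_quad_comb t y z : b (t *: y + (1 - t) *: z) (t *: y + (1 - t) *: z) =
  t * b y y + (1 - t) * b z z - t * (1 - t) * b (y - z) (y - z).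
Proof. by rewrite (bil_quadD (t *: y)) !bZl !bilZr !bilBl !bilBr (bC z y); ring. Qed.

Lemma bil_quad_complement u x : b x x = b u x -> b (u - x) (u - x) = b u (u - x).
Proof. by move=> xx; rewrite !bilBl !bilBr xx (bC x u); ring. Qed.

Hypothesis b_ge0 : forall x, 0 <= b x x.

Lemma bil_isotropic_orthogonal x : b x x = 0 -> forall y, b x y = 0.
Proof.
move=> xx0 y; set c := b y y; set s := b x y.
pose t := - s / (c + 1).
have c0 : 0 <= c by exact: b_ge0.
have := b_ge0 (x + t *: y); rewrite bil_quadD xx0 bilZr bZl bilZr -/c -/s.
have -> : 0 + 2 * (t * s) + t * (t * c) = - (s ^+ 2 * (c + 2)) / (c + 1) ^+ 2.
  by rewrite /t; field; rewrite gt_eqF //; lra.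
rewrite pmulr_lge0 ?invr_gt0 ?exprn_gt0 //; last lra.
by move=> s0; apply/eqP; rewrite -sqrf_eq0 eq_le sqr_ge0 andbT; nra.
Qed.

End SymmetricBilinearForm.

Section BilinearFormRow.
Context {R : realType} {n : nat} {b : 'rV[R]_n -> 'rV[R]_n -> R}.
Hypotheses (bC : forall x y, b x y = b y x)
  (bDl : forall x y z, b (x + y) z = b x z + b y z)
  (bZl : forall k x y, b (k *: x) y = k * b x y).

Lemma bil_quad_continuous : continuous (fun x => b x x).
Proof.
have -> : (fun x => b x x) = fun x => \sum_(i < n) \sum_(j < n)
    x 0 i * x 0 j * b (delta_mx 0 i) (delta_mx 0 j).
  apply: funext => x; rewrite {1 2}(row_sum_delta x) (bil_suml bDl bZl).
  apply: eq_bigr => i _; rewrite bZl (bil_sumr bC bDl bZl) mulr_sumr.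
  by apply: eq_bigr => j _; rewrite (bilZr bC bZl) mulrA.
apply: continuous_big => [|i _]; first exact: add_continuous.
apply: continuous_big => [|j _ x]; first exact: add_continuous.
have coordM := continuousM (@coord_continuous R 1 n 0 i x)
  (@coord_continuous R 1 n 0 j x).
exact: (continuousM coordM (@cst_continuous _ _ (b (delta_mx 0 i) (delta_mx 0 j)) x)).
Qed.

End BilinearFormRow.

Section SelfDualTransitive.
Context {R : realType} {n : nat} {Om : set 'rV[R]_n}
  {mu : probability (MatB R n) R} {u : 'rV[R]_n}.
Hypotheses (ssOm : state_space Om) (haar : is_haar Om mu)
  (trOm : transitive_ss Om) (sdOm : self_dual mu Om) (uOm : unit_effect mu Om u).
Local Notation B := (ipG mu).
Implicit Types x y z v w e : 'rV[R]_n.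

Let cOm : compact Om. Proof. by case: ssOm. Qed.
Let sOm : spans Om. Proof. by case: ssOm. Qed.
Let BC := ipGC mu.
Let BDl := ipGDl _ _ cOm sOm haar.
Let BZl := ipGZl _ _ cOm sOm haar.
Let BZr := bilZr BC BZl.
Let BBl := bilBl BDl BZl.
Let BBr := bilBr BC BDl BZl.
Let B0l := bil0l BZl.
Let B0r := bil0r BC BZl.
Let Bsuml := bil_suml BDl BZl.
Let Bsumr := bil_sumr BC BDl BZl.

Lemma state_Vplus {w} : Om w -> Vplus Om w.
Proof. by move=> Ow; exists 1; split => //; exists w; rewrite scale1r. Qed.

Lemma Vplus_ipG_ge0 {x y} : Vplus Om x -> Vplus Om y -> 0 <= B x y.
Proof. by move=> Px; rewrite sdOm => /(_ x Px). Qed.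

Lemma effect_Vplus {e} : effects mu Om e -> Vplus Om e.
Proof.
move=> eff; rewrite sdOm => _ [l [l0 [w [Ow ->]]]].
by rewrite BZl mulr_ge0 // BC; case/andP: (eff w Ow).
Qed.

(* Both x and -x lie in V+, say x = l w and -x = l' w' with states w, w';
   unless l = 0, the affine combination (l w + l' w') / (l + l') = 0
   contradicts 0 \notin aff Om. *)
Lemma ipG_nondegenerate x : (forall y, B x y = 0) -> x = 0.
Proof.
move=> x0.
have [l [l0 [w [Ow xE]]]] : Vplus Om x by rewrite sdOm => y _; rewrite BC x0.
have [l' [l'0 [w' [Ow' xE']]]] : Vplus Om (- x).
  by rewrite sdOm => y _; rewrite BC -scaleN1r BZl x0 mulr0.
have [ll'0|ll'0] := eqVneq (l + l') 0.
  by rewrite xE (_ : l = 0) ?scale0r //; lra.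
exfalso; have [_ _ _] := ssOm; apply.
exists 2%N, [ffun i : 'I_2 => if val i == 0%N then l / (l + l') else l' / (l + l')].
exists [ffun i : 'I_2 => if val i == 0%N then w else w']; split.
- by move=> i; rewrite ffunE; case: ifP.
- by rewrite !big_ord_recl big_ord0 /= !ffunE /= addr0 -mulrDl divff.
rewrite !big_ord_recl big_ord0 /= !ffunE /= addr0.
by rewrite !(mulrC _ (l + l')^-1) -!scalerA -xE -xE' -scalerDr subrr scaler0.
Qed.

Lemma ipG_anisotropic x : B x x = 0 -> x = 0.
Proof.
by move/(bil_isotropic_orthogonal BC BDl BZl (ipG_ge0 mu)); exact: ipG_nondegenerate.
Qed.

Lemma effect_scaled_state {e} : effects mu Om e -> e != 0 ->
  0 < B u e /\ exists2 w, Om w & e = B u e *: w.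
Proof.
move=> /effect_Vplus [l [l0 [w [Ow eE]]]] e0.
have ueE : B u e = l by rewrite eE BZr uOm ?mulr1.
have l_gt0 : 0 < l.
  by rewrite lt_def l0 andbT; apply: contraNneq e0 => l0'; rewrite eE l0' scale0r.
by rewrite ueE; split => //; exists w.
Qed.

Lemma effect_normalized_state {e} : effects mu Om e -> e != 0 ->
  Om ((B u e)^-1 *: e).
Proof.
move=> eff e0; have [ue0 [w Ow eE]] := effect_scaled_state eff e0.
by rewrite {2}eE scalerA mulVf ?scale1r // gt_eqF.
Qed.

Lemma quad_argmax_extreme {m} : Om m -> (forall w, Om w -> B w w <= B m m) ->
  extreme_point Om m.
Proof.
move=> Om_m mmax; split=> // y z t Oy Oz /andP[t0 t1] mE.
have yz : y = z.
  apply/eqP; rewrite -subr_eq0; apply/eqP/ipG_anisotropic/eqP.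
  have tt0 : 0 < t * (1 - t) by rewrite mulr_gt0 // subr_gt0.
  have := bil_quad_comb BC BDl BZl t y z; rewrite -mE => mmE.
  have := mmax y Oy; have := mmax z Oz.
  by rewrite eq_le ipG_ge0 andbT; nra.
have my : m = y by rewrite mE -yz -scalerDl addrC subrK scale1r.
by rewrite my -yz.
Qed.

Lemma quad_le_extreme {om w} : extreme_point Om om -> Om w -> B w w <= B om om.
Proof.
move=> eom Ow.
have [m /set_mem Om_m mmax] := compact_EVT_max (ex_intro _ w Ow) cOm
  (continuous_subspaceT (bil_quad_continuous BC BDl BZl)).
have mmax' v : Om v -> B v v <= B m m by move=> Ov; apply: mmax; exact: mem_set.
have [T [GT ->]] := trOm _ _ (quad_argmax_extreme Om_m mmax') eom.
by rewrite (ipG_GLset_invariant _ _ cOm sOm haar) // mmax'.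
Qed.

Lemma ipG_le_quad_extreme {om w} : extreme_point Om om -> Om w ->
  B om w <= B om om.
Proof.
move=> eom Ow; have := quad_le_extreme eom Ow; have := ipG_ge0 mu (om - w).
by rewrite BBl !BBr (BC w om); lra.
Qed.

Lemma scaled_states_eq {a c y w} : Om y -> Om w -> a *: y = c *: w -> a != 0 ->
  y = w.
Proof.
move=> Oy Ow ayw a0.
have ac : a = c by have := congr1 (B u) ayw; rewrite !BZr !uOm // !mulr1.
by apply: (scalerI a0); rewrite ayw ac.
Qed.

Lemma effect_of_summand {e e1 e2} : effects mu Om e -> e = e1 + e2 ->
  Vplus Om e1 -> Vplus Om e2 -> effects mu Om e1.
Proof.
move=> eff eE P1 P2 v Ov; move: (eff v Ov); rewrite eE BDl => /andP[_ le1].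
have ge0_1 := Vplus_ipG_ge0 P1 (state_Vplus Ov).
have ge0_2 := Vplus_ipG_ge0 P2 (state_Vplus Ov).
by rewrite ge0_1 /=; lra.
Qed.

Lemma indecomposable_extreme {e l w} : effects mu Om e ->
  indecomposable mu Om e -> 0 < l -> Om w -> e = l *: w -> extreme_point Om w.
Proof.
move=> eff [_ indec] l0 Ow eE; split=> // y z t Oy Oz /andP[t0 t1] wE.
have scaled_Vplus c x : 0 < c -> Om x -> Vplus Om (c *: x).
  by move=> c0 Ox; exists c; split; [exact: ltW | exists x].
have ly0 : 0 < l * t by rewrite mulr_gt0.
have lz0 : 0 < l * (1 - t) by rewrite mulr_gt0 ?subr_gt0.
have e12 : e = (l * t) *: y + (l * (1 - t)) *: z.
  by rewrite eE wE scalerDr !scalerA.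
have eff_y := effect_of_summand eff e12
  (scaled_Vplus _ _ ly0 Oy) (scaled_Vplus _ _ lz0 Oz).
have eff_z := effect_of_summand eff (etrans e12 (addrC _ _))
  (scaled_Vplus _ _ lz0 Oz) (scaled_Vplus _ _ ly0 Oy).
have [[c1 yE] [c2 zE]] := indec _ _ eff_y eff_z e12.
rewrite eE scalerA in yE; rewrite eE scalerA in zE.
by split; [apply: (scaled_states_eq Oy Ow yE) | apply: (scaled_states_eq Oz Ow zE)];
  rewrite gt_eqF.
Qed.

Lemma pure_extreme_eval1 {e l w} : pure_effect mu Om e -> 0 < l ->
  extreme_point Om w -> e = l *: w -> B e w = 1.
Proof.
move=> [eff pure] l0 ew eE; have [Ow _] := ew.
have ww0 : 0 < B w w.
  rewrite lt_def ipG_ge0 andbT; apply/eqP => /ipG_anisotropic w0.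
  by have := uOm w Ow; rewrite w0 B0r => /esym/eqP; rewrite oner_eq0.
have ewE : B e w = l * B w w by rewrite eE BZl.
have ew0 : 0 < B e w by rewrite ewE mulr_gt0.
have /andP[_ ew1] := eff w Ow.
(* Otherwise e / e(w) is still an effect, of which e is a proper convex
   combination with 0. *)
apply/eqP; rewrite eq_le ew1 /= leNgt; apply/negP => ew_lt1.
have eff_scaled : effects mu Om ((B e w)^-1 *: e).
  move=> v Ov; rewrite BZl [X in B X v]eE BZl.
  have wv0 := Vplus_ipG_ge0 (state_Vplus Ow) (state_Vplus Ov).
  have wv_le := ipG_le_quad_extreme ew Ov.
  rewrite !mulr_ge0 ?invr_ge0 ?(ltW ew0) ?(ltW l0) //=.
  by rewrite ler_pdivrMl // mulr1 ewE ler_wpM2l // ltW.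
have eff0 : effects mu Om 0 by move=> v _; rewrite B0l lexx ler01.
have ew01 : 0 < B e w < 1 by rewrite ew0 ew_lt1.
have eE' : e = B e w *: ((B e w)^-1 *: e) + (1 - B e w) *: 0.
  by rewrite scaler0 addr0 scalerA mulfV ?scale1r // gt_eqF.
have [scaledE _] := pure _ _ _ eff_scaled eff0 ew01 eE'.
have := congr1 (B^~ w) scaledE; rewrite /= BZl mulVf ?gt_eqF // => ew_eq1.
by move: ew_lt1; rewrite -ew_eq1 ltxx.
Qed.

Lemma pure_indecomposable_state {e} : pure_effect mu Om e ->
  indecomposable mu Om e -> exists2 w, Om w & e = B u e *: w /\ B e w = 1.
Proof.
move=> /[dup] pe [eff _] /[dup] ie [e0 _].
have [ue0 [w Ow eE]] := effect_scaled_state eff e0.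
have ew := indecomposable_extreme eff ie ue0 Ow eE.
by exists w => //; split => //; exact: pure_extreme_eval1 pe ue0 ew eE.
Qed.

Lemma pure_indecomposable_quad {e} : pure_effect mu Om e ->
  indecomposable mu Om e -> B e e = B u e.
Proof.
move=> pe ie; have [w _ [eE ew1]] := pure_indecomposable_state pe ie.
by rewrite {2}eE BZr ew1 mulr1.
Qed.

Section PureSum.
Variables (k : nat) (es : 'I_k -> 'rV[R]_n).
Hypothesis pure_es :
  forall i, pure_effect mu Om (es i) /\ indecomposable mu Om (es i).
Hypothesis sum_le1 : forall v, Om v -> B (\sum_(i < k) es i) v <= 1.

Lemma pure_sum_orthogonal i j : i != j -> B (es j) (es i) = 0.
Proof.
(* es i is a multiple of a state w with (es i)(w) = 1, while the whole sum
   is at most 1 at w. *)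
move=> ij; have [pi ii] := pure_es i.
have [w Ow [eiE eiw]] := pure_indecomposable_state pi ii.
have es_ge0 j' : 0 <= B (es j') w.
  have [[eff _] _] := pure_es j'.
  exact: Vplus_ipG_ge0 (effect_Vplus eff) (state_Vplus Ow).
have rest_le0 : \sum_(j' < k | j' != i) B (es j') w <= 0.
  by have := sum_le1 w Ow; rewrite Bsuml (bigD1 i) //= eiw -lerBrDl subrr.
have rest0 : \sum_(j' < k | j' != i) B (es j') w = 0.
  by apply/eqP; rewrite eq_le rest_le0 sumr_ge0.
have ejw : B (es j) w = 0.
  by apply: (psumr_eq0P (fun j' _ => es_ge0 j') rest0); rewrite eq_sym.
by rewrite eiE BZr ejw mulr0.
Qed.

Lemma pure_sum_quad :
  B (\sum_(i < k) es i) (\sum_(i < k) es i) = B u (\sum_(i < k) es i).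
Proof.
rewrite Bsuml Bsumr; apply: eq_bigr => i _.
rewrite Bsumr (bigD1 i) //= big1 ?addr0.
  exact: pure_indecomposable_quad (pure_es i).1 (pure_es i).2.
by move=> j ji; rewrite BC pure_sum_orthogonal // eq_sym.
Qed.

End PureSum.

Lemma ideal_observable_quad (A : finType) (f : A -> 'rV[R]_n) a :
  ideal_observable mu Om u f -> B (f a) (f a) = B u (f a).
Proof.
move=> [[eff _ _] ideal]; have [k [es [pure_es faE]]] := ideal a.
have sum_le1 v : Om v -> B (\sum_(i < k) es i) v <= 1.
  move=> Ov; have /andP[fav0 fav1] := eff a v Ov.
  case: faE => faE; first by rewrite -faE.
  by move: fav0; rewrite faE BBl uOm // subr_ge0.
have SS := pure_sum_quad _ _ pure_es sum_le1.
by case: faE => ->; [exact: SS | exact: bil_quad_complement BC BDl BZl _ _ SS].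
Qed.

Lemma ideal_observable_normalized (A : finType) (f : A -> 'rV[R]_n) a :
  ideal_observable mu Om u f -> f a != 0 -> B (f a) ((B u (f a))^-1 *: f a) = 1.
Proof.
move=> idf fa0; have [[eff _ _] _] := idf.
have [ufa0 _] := effect_scaled_state (eff a) fa0.
by rewrite BZr ideal_observable_quad // mulVf // gt_eqF.
Qed.

End SelfDualTransitive.

Theorem lemma3p2 (R : realType) (N : nat) (Om : set 'rV[R]_N.+1)
  (mu : probability (MatB R N.+1) R) (u : 'rV[R]_N.+1) :
  state_space Om -> is_haar Om mu -> transitive_ss Om ->
  invariant_state_normalized Om -> self_dual mu Om -> unit_effect mu Om u ->
  (forall e, effects mu Om e -> e != 0 -> Om ((ipG mu u e)^-1 *: e)) /\
  (forall (A : finType) (f : A -> 'rV[R]_N.+1), ideal_observable mu Om u f ->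
     forall a, f a != 0 ->
       ipG mu (f a) ((ipG mu u (f a))^-1 *: f a) = 1).
Proof.
move=> ssOm haar trOm _ sdOm uOm; split => [e | A f idf a].
  exact: (effect_normalized_state ssOm haar sdOm uOm).
exact: (ideal_observable_normalized ssOm haar trOm sdOm uOm).
Qed.
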